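(* Let $(S,K,I)$ be a split graph, and let $u,v\in I$ be distinct vertices such that $uxv$ is a path in $A_4(S)$ for some $x\in K$. Then there is a path $P$ in $A_4(S)$ between $u$ and $v$ with $V(P)\subseteq I$ and $|V(P)|\le 4$.
   Context: All graphs are finite and simple. A split graph is a graph $S$ whose vertex set is a disjoint union $V(S)=K\,\dot\cup\,I$ with $K$ a clique and $I$ an independent set; $(K,I)$ is called a bipartition of $S$, and $(S,K,I)$ denotes $S$ together with this fixed bipartition. A 2-switch in a graph $G$ is performed on four distinct vertices $a,b,c,d$ with $ab,cd\in E(G)$ and $ac,bd\notin E(G)$: it deletes $ab,cd$ and adds $ac,bd$; $a,b,c,d$ are said to participate in it. $A_4(G)$ is the graph with vertex set $V(G)$ in which distinct $u,v$ are adjacent iff some 2-switch on $G$ has both $u$ and $v$ among its participating vertices. *)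

From mathcomp Require Import all_boot.
Set Implicit Arguments. Unset Strict Implicit. Unset Printing Implicit Defensive.

Definition simple_graph (T : finType) (e : rel T) : Prop :=
  irreflexive e /\ symmetric e.

Definition split_bipartition (T : finType) (e : rel T) (K I : {set T}) : Prop :=
  [/\ [disjoint K & I], K :|: I = [set: T],
      (forall x y, x \in K -> y \in K -> x != y -> e x y)
    & (forall x y, x \in I -> y \in I -> ~~ e x y)].

Definition two_switch (T : finType) (e : rel T) (a b c d : T) : bool :=
  [&& uniq [:: a; b; c; d], e a b, e c d, ~~ e a c & ~~ e b d].

Definition A4 (T : finType) (e : rel T) : rel T :=
  fun u v => (u != v) &&
    [exists a, exists b, exists c, exists d,
       two_switch e a b c d && (u \in [:: a; b; c; d]) && (v \in [:: a; b; c; d])].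

Definition is_path_between (T : finType) (g : rel T) (u v : T) (p : seq T) : bool :=
  [&& path g u p, last u p == v & uniq (u :: p)].

From mathcomp Require Import all_boot.
Set Implicit Arguments. Unset Strict Implicit. Unset Printing Implicit Defensive.

(* Two nonadjacent vertices p, q whose neighbourhoods are incomparable are
   A4-adjacent, via the 2-switch p y, q z -> p z, q y with y in N(p) \ N(q)
   and z in N(q) \ N(p).  If u x is an A4-edge with u in I and x in K, the
   2-switch behind it provides u' in I whose neighbourhood is incomparable
   with that of u and which disagrees with u on x; likewise v' for v.  A case
   analysis on the inclusions between the neighbourhoods of u, u', v, v' then
   gives an incomparability walk from u to v through u' and v' of length at
   most 3; it stays in I, hence is an A4-walk, and removing its loops leaves
   a path. *)

Section Neighbourhoods.

Variables (T : finType) (e : rel T).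

Definition nbhd_incomparable (p q : T) : bool :=
  [exists y, exists z, [&& e p y, ~~ e p z, e q z & ~~ e q y]].

Lemma nbhd_incomparableP p q :
  reflect (exists y z, [/\ e p y, ~~ e p z, e q z & ~~ e q y])
          (nbhd_incomparable p q).
Proof.
apply: (iffP existsP) => [[y /existsP[z /and4P[? ? ? ?]]]|[y [z [? ? ? ?]]]].
  by exists y, z.
by exists y; apply/existsP; exists z; apply/and4P.
Qed.

Lemma nbhd_incomparable_sym : symmetric nbhd_incomparable.
Proof.
by move=> p q; apply/nbhd_incomparableP/nbhd_incomparableP;
  move=> [y [z [? ? ? ?]]]; exists z, y.
Qed.

Lemma nbhd_incomparable_neq p q : nbhd_incomparable p q -> p != q.
Proof.
by case/nbhd_incomparableP=> y [z [py _ _ qy]]; apply: contraNneq qy => <-.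
Qed.

Lemma nbhd_comparable p q : ~~ nbhd_incomparable p q ->
  (forall y, e p y -> e q y) \/ (forall y, e q y -> e p y).
Proof.
move=> pq; have [sub_pq|/forallPn[y]] := boolP [forall y, e p y ==> e q y].
  by left=> y py; move/forallP/(_ y): sub_pq; rewrite py.
rewrite negb_imply => /andP[py qy]; right=> z qz.
apply/negPn/negP=> pz; case/negP: pq; apply/nbhd_incomparableP.
by exists y, z.
Qed.

Lemma nbhd_incomparable_partners u u' v v' x :
  nbhd_incomparable u u' -> nbhd_incomparable v v' ->
  e u x != e u' x -> e v x != e v' x ->
  ~~ nbhd_incomparable u v -> ~~ nbhd_incomparable u' v ->
  ~~ nbhd_incomparable u v' ->
  nbhd_incomparable u' v'.
Proof.
move=> iu iv xu xv nuv nu'v nuv'.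
wlog sub_uv : u u' v v' iu iv xu xv nuv nu'v nuv' / forall y, e u y -> e v y.
  move=> gen; case: (nbhd_comparable nuv) => [|sub_vu]; first exact: gen.
  by rewrite nbhd_incomparable_sym; apply: gen sub_vu;
    rewrite // nbhd_incomparable_sym.
have [a [_ [ua _ _ u'a]]] := nbhd_incomparableP _ _ iu.
have [_ [b [_ vb v'b _]]] := nbhd_incomparableP _ _ iv.
have sub_u'v : forall y, e u' y -> e v y.
  case: (nbhd_comparable nu'v) => // sub_vu'.
  by move: (sub_vu' _ (sub_uv _ ua)); rewrite (negbTE u'a).
have sub_uv' : forall y, e u y -> e v' y.
  case: (nbhd_comparable nuv') => // sub_v'u.
  by move: (sub_uv _ (sub_v'u _ v'b)); rewrite (negbTE vb).
have ux : ~~ e u x by apply: contraNN xv => ux; rewrite sub_uv // sub_uv'.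
have u'x : e u' x by move: xu; rewrite (negbTE ux); case: (e u' x).
have v'x : ~~ e v' x by move: xv; rewrite sub_u'v //; case: (e v' x).
apply/nbhd_incomparableP; exists x, b; split=> //.
by apply: contraNN vb; apply: sub_u'v.
Qed.

Lemma nbhd_incomparable_walk u u' v v' x :
  nbhd_incomparable u u' -> nbhd_incomparable v v' ->
  e u x != e u' x -> e v x != e v' x ->
  exists p, [/\ path nbhd_incomparable u p, last u p = v,
                all (mem [:: u'; v'; v]) p & size p <= 3].
Proof.
move=> iu iv xu xv; have iv' := iv; rewrite nbhd_incomparable_sym in iv'.
have [iuv|nuv] := boolP (nbhd_incomparable u v).
  by exists [:: v]; rewrite /= iuv !inE eqxx !orbT.
have [iu'v|nu'v] := boolP (nbhd_incomparable u' v).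
  by exists [:: u'; v]; rewrite /= iu iu'v !inE !eqxx !orbT.
have [iuv'|nuv'] := boolP (nbhd_incomparable u v').
  by exists [:: v'; v]; rewrite /= iuv' iv' !inE !eqxx !orbT.
have iu'v' := nbhd_incomparable_partners iu iv xu xv nuv nu'v nuv'.
by exists [:: u'; v'; v]; rewrite /= iu iu'v' iv' !inE !eqxx !orbT.
Qed.

End Neighbourhoods.

Lemma path_shorten (T : finType) (g : rel T) u p : path g u p ->
  exists q, [/\ is_path_between g u (last u p) q, {subset q <= p}
              & size q <= size p].
Proof.
case/shortenP=> q gq uq sub_qp; exists q; split=> //.
  by rewrite /is_path_between gq eqxx.
by apply: uniq_leq_size sub_qp; case/andP: uq.
Qed.

Lemma A4_of_nbhd_incomparable (T : finType) (e : rel T) p q :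
  simple_graph e -> ~~ e p q -> nbhd_incomparable e p q -> A4 e p q.
Proof.
case=> e_irr e_sym npq ipq; rewrite /A4 (nbhd_incomparable_neq ipq) /=.
have [y [z [py pz qz qy]]] := nbhd_incomparableP _ _ _ ipq.
apply/existsP; exists p; apply/existsP; exists y.
apply/existsP; exists z; apply/existsP; exists q.
rewrite !inE !eqxx ?orbT !andbT /two_switch py pz (e_sym z) qz (e_sym y) qy.
rewrite /= !inE !negb_or (nbhd_incomparable_neq ipq) !andbT.
have -> : p != y by apply: contraTneq py => <-; rewrite e_irr.
have -> : p != z by apply: contraNneq npq => ->; rewrite e_sym.
have -> : y != z by apply: contraTneq py => ->.
have -> : y != q by apply: contraTneq py => ->.
by apply: contraTneq qz => ->; rewrite e_irr.
Qed.

Lemma A4_sym (T : finType) (e : rel T) : symmetric (A4 e).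
Proof.
move=> p q; rewrite /A4 eq_sym; congr (_ && _).
do 4![apply: eq_existsb => ?]; by rewrite andbAC.
Qed.

Section SplitGraph.

Variables (T : finType) (e : rel T) (K I : {set T}).
Hypotheses (e_simple : simple_graph e) (e_split : split_bipartition e K I).

Let e_sym : symmetric e. Proof. by case: e_simple. Qed.

Lemma split_inK y : (y \in K) = (y \notin I).
Proof.
case: e_split => KI covKI _ _.
have : y \in K :|: I by rewrite covKI inE.
by rewrite inE; case/orP=> [yK|yI]; rewrite ?yK ?(disjointFr KI yK) ?yI
  ?(disjointFl KI yI).
Qed.

Lemma two_switch_sym a b c d : two_switch e a b c d ->
  [/\ two_switch e b a d c, two_switch e c d a b & two_switch e d c b a].
Proof.
case/and5P=> uabcd ab cd ac bd; move: uabcd.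
rewrite !cons_uniq !inE !negb_or.
case/and4P=> /and3P[nab nac nad] /andP[nbc nbd] ncd _.
rewrite /two_switch /= !inE !negb_or ab cd ac bd
  !(e_sym b a, e_sym d c, e_sym c a, e_sym d b) !andbT
  !(eq_sym b a, eq_sym d c, eq_sym c a, eq_sym d b, eq_sym d a, eq_sym c b).
by split; do !(apply/andP; split).
Qed.

Lemma A4_split_partner u x : A4 e u x -> u \in I -> x \in K ->
  exists u', [/\ u' \in I, nbhd_incomparable e u u' & e u x != e u' x].
Proof.
case/andP=> _ /existsP[a /existsP[b /existsP[c /existsP[d]]]].
case/andP=> /andP[sw hu] hx uI xK.
wlog ua : a b c d sw hu hx / u = a.
  move=> gen; have [sw1 sw2 sw3] := two_switch_sym sw.
  have perm_switch y : y \in [:: a; b; c; d] ->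
    [/\ y \in [:: b; a; d; c], y \in [:: c; d; a; b] & y \in [:: d; c; b; a]].
    by rewrite !inE => /or4P[] ->; rewrite ?orbT.
  have [hx1 hx2 hx3] := perm_switch x hx; have [hu1 hu2 hu3] := perm_switch u hu.
  move: (hu); rewrite !inE => /or4P[] /eqP ua.
  - exact: gen sw hu hx ua.
  - exact: gen sw1 hu1 hx1 ua.
  - exact: gen sw2 hu2 hx2 ua.
  - exact: gen sw3 hu3 hx3 ua.
subst u; case/and5P: sw => uabcd ab cd ac bd {hu}.
case: e_split => _ _ cliqueK indepI.
have bK : b \in K.
  by rewrite split_inK; apply: contraTN ab => bI; apply: indepI uI bI.
have dI : d \in I.
  rewrite -[d \in I]negbK -split_inK; apply: contraNN bd => dK.
  apply: cliqueK => //.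
  by move: uabcd; rewrite /= !inE !negb_or => /and4P[_ /andP[]].
have cK : c \in K by rewrite split_inK; apply: contraTN cd => cI; apply: indepI cI dI.
exists d; split=> //.
  by apply/nbhd_incomparableP; exists b, c; rewrite (e_sym d b) (e_sym d c).
move: hx; rewrite !inE => /or4P[] /eqP xE; subst x.
- by move: xK; rewrite split_inK uI.
- by rewrite ab (e_sym d b) bd.
- by rewrite (negbTE ac) (e_sym d c) cd.
- by move: xK; rewrite split_inK dI.
Qed.

End SplitGraph.

Theorem lemma2p2 (T : finType) (e : rel T) (K I : {set T}) (u v x : T) :
  simple_graph e -> split_bipartition e K I ->
  u \in I -> v \in I -> u != v -> x \in K ->
  is_path_between (A4 e) u v [:: x; v] ->
  exists p : seq T,
    [/\ is_path_between (A4 e) u v p, all (fun w => w \in I) (u :: p)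
      & size (u :: p) <= 4].
Proof.
move=> e_simple e_split uI vI _ xK /and3P[/= /and3P[ux xv _] _ _].
have [u' [u'I iu xu]] := A4_split_partner e_simple e_split ux uI xK.
rewrite A4_sym in xv.
have [v' [v'I iv xv']] := A4_split_partner e_simple e_split xv vI xK.
have [p [walk last_p p_sub size_p]] := nbhd_incomparable_walk iu iv xu xv'.
have pI : all (mem I) (u :: p).
  rewrite /= uI; apply: sub_all p_sub => w.
  by rewrite !inE => /or3P[] /eqP->.
have A4_walk : path (A4 e) u p.
  apply: sub_in_path pI walk => p1 q1 p1I q1I.
  apply: A4_of_nbhd_incomparable e_simple _.
  by case: e_split => _ _ _; apply.
have [q [q_path q_sub size_q]] := path_shorten A4_walk.
exists q; split; first by rewrite -last_p.
  by rewrite /= uI; apply/allP=> w /q_sub; case/andP: pI => _ /allP; apply.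
by rewrite ltnS (leq_trans size_q).
Qed.
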